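(* Let $n\ge3$ and let $x$ be a vertex of the Mobius ladder $M_{2n}$. Assign to $x$ a label $\ell\in\{1,2,\dots,\lceil n/2\rceil\}$. Then for every vertex $v$ covered by $x$ there exists a vertex $u$, also covered by $x$, such that $d(u,v)=2$.
   Context: For $n\ge2$, the Mobius ladder $M_{2n}$ has vertex set $\{x_1,\dots,x_{2n}\}$ and edge set $\{\{x_i,x_{i+1}\}:1\le i\le 2n\}\cup\{\{x_i,x_{i+n}\}:1\le i\le n\}$, subscripts modulo $2n$. $d$ denotes graph distance. A vertex $x$ carrying label $\ell$ covers exactly the vertices at distance $\ell$ from $x$. *)

From mathcomp Require Import all_boot.
Unset Printing Implicit Defensive.

(* Mobius ladder M_{2n}: vertex x_{i+1} is encoded by i : 'I_(2n) (0-indexed).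
   Edges: {x_i, x_{i+1}} (indices mod 2n) and {x_i, x_{i+n}}. *)
Definition mobius_adj (n : nat) (u v : 'I_(2 * n)) : bool :=
  [|| (v == (u + 1) %% (2 * n) :> nat),
      (u == (v + 1) %% (2 * n) :> nat) |
      (v == (u + n) %% (2 * n) :> nat)].

Fixpoint walkb (n : nat) (k : nat) (u v : 'I_(2 * n)) : bool :=
  match k with
  | 0 => u == v
  | k'.+1 => [exists w, @mobius_adj n u w && @walkb n k' w v]
  end.

Definition mobius_dist_is (n : nat) (u v : 'I_(2 * n)) (k : nat) : Prop :=
  @walkb n k u v /\ forall k', k' < k -> ~~ @walkb n k' u v.

Definition covers (n : nat) (x : 'I_(2 * n)) (l : nat) (v : 'I_(2 * n)) : Prop :=
  @mobius_dist_is n x v l.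

From mathcomp Require Import all_boot zify.

(* Vertices are residues mod 2n, and the distance from u to v depends only on
   the offset a = u - v mod 2n: with c = min(a, 2n - a) the distance along the
   rim, it is min(c, n + 1 - c), because a shortest walk uses at most one rung
   and crossing a rung turns c into n - c.  Adding n - 1 or n + 1 to a nonzero
   offset (a rung followed by one rim step) preserves this quantity for the
   right choice of sign.  Hence if x covers v, so does one of v + n - 1 and
   v + n + 1, both of which are at distance 2 from v once n >= 3. *)

Lemma modn_addE a b d : a < d -> b <= d ->
  (a + b) %% d = if a + b < d then a + b else a + b - d.
Proof.
move=> lt_ad le_bd; case: ifP => [/modn_small //|/negbT]; rewrite -leqNgt => le_d.
by rewrite -[in LHS](subnK le_d) modnDr modn_small //; lia.
Qed.

Section MobiusLadder.

Variable n : nat.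
Hypothesis n_gt0 : 0 < n.

Local Notation N := (2 * n).

Let N_gt0 : 0 < N. Proof. by rewrite muln_gt0. Qed.

Definition ladder_steps : seq nat := [:: 1; N.-1; n].

Definition rim_offset (u v : nat) : nat := (u + (N - v)) %% N.

Definition ladder_norm (a : nat) : nat :=
  let c := minn a (N - a) in minn c (n.+1 - c).

Definition rim_shift (u : 'I_N) (b : nat) : 'I_N := Ordinal (ltn_pmod (u + b) N_gt0).

Lemma rim_offset_lt u v : rim_offset u v < N.
Proof. exact: ltn_pmod. Qed.

Lemma rim_offset_shift u v b : rim_offset ((u + b) %% N) v = (rim_offset u v + b) %% N.
Proof. by rewrite /rim_offset modnDml modnDml addnAC. Qed.

Lemma rim_offset_add x u v : u <= N ->
  (rim_offset x u + rim_offset u v) %% N = rim_offset x v.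
Proof.
move=> le_uN; rewrite /rim_offset modnDm.
have -> : x + (N - u) + (u + (N - v)) = x + (N - v) + N by lia.
exact: modnDr.
Qed.

Lemma rim_offset_id u : u <= N -> rim_offset u u = 0.
Proof. by move=> le_uN; rewrite /rim_offset subnKC ?modnn. Qed.

Lemma rim_offset_shift_target x v c : v <= N -> c <= N ->
  rim_offset x ((v + c) %% N) = (rim_offset x v + (N - c)) %% N.
Proof.
move=> le_vN le_cN; have le_N : (v + c) %% N <= N by exact/ltnW/ltn_pmod.
rewrite -(rim_offset_add x _ v le_N) rim_offset_shift rim_offset_id // add0n.
by rewrite modnDmr modnDml -addnA subnKC // modnDr modn_mod.
Qed.

Lemma rim_offset_rim_shift (x v : 'I_N) c : c < N ->
  rim_offset x (rim_shift v c) = (rim_offset x v + (N - c)) %% N /\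
  rim_offset (rim_shift v c) v = c.
Proof.
move=> lt_cN; have le_vN := ltnW (ltn_ord v).
rewrite rim_offset_shift_target ?rim_offset_shift ?rim_offset_id ?(ltnW lt_cN) //.
by rewrite add0n (modn_small lt_cN).
Qed.

Lemma rim_offset_eq0 (u v : 'I_N) : rim_offset u v = 0 -> u = v.
Proof.
have := ltn_ord u; have := ltn_ord v => lt_vN lt_uN.
rewrite /rim_offset modn_addE ?leq_subr //.
by case: ifP => ? ?; apply: ord_inj; lia.
Qed.

Lemma mobius_adjP (u w : 'I_N) :
  reflect (exists2 b, b \in ladder_steps & val w = (u + b) %% N) (mobius_adj n u w).
Proof.
have pred_succ (y : nat) : ((y + N.-1) %% N + 1) %% N = y %% N.
  by rewrite modnDml -addnA addn1 prednK // modnDr.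
apply: (iffP or3P) => [[] /eqP wE | [b]].
- by exists 1; rewrite ?inE ?eqxx.
- exists N.-1; rewrite ?inE ?eqxx ?orbT //.
  by rewrite wE modnDml -addnA add1n prednK // modnDr modn_small.
- by exists n; rewrite ?inE ?eqxx ?orbT.
rewrite !inE => /or3P [] /eqP -> wE.
- by apply: Or31; rewrite wE.
- by apply: Or32; rewrite wE pred_succ modn_small.
- by apply: Or33; rewrite wE.
Qed.

Lemma ladder_norm_eq0 a : a < N -> (ladder_norm a == 0) = (a == 0).
Proof. by rewrite /ladder_norm; lia. Qed.

Lemma ladder_norm_step a b : a < N -> b \in ladder_steps ->
  ladder_norm a <= ladder_norm ((a + b) %% N) + 1.
Proof.
move=> lt_aN; rewrite !inE => /or3P [] /eqP ->;
  rewrite /ladder_norm modn_addE; try lia; case: ifP; lia.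
Qed.

Lemma ladder_norm_descent a m : a < N -> ladder_norm a = m.+1 ->
  exists2 b, b \in ladder_steps & ladder_norm ((a + b) %% N) = m.
Proof.
move=> lt_aN; rewrite /ladder_norm => norm_a.
have [along_rim|across_rung] := leqP (minn a (N - a)).*2 n.+1.
  have [le_an|lt_na] := leqP a n; [exists N.-1 | exists 1];
    rewrite ?inE ?eqxx ?orbT // modn_addE; try lia; case: ifP; lia.
by exists n; rewrite ?inE ?eqxx ?orbT // modn_addE; try lia; case: ifP; lia.
Qed.

Lemma walkb_ladder_norm k (u v : 'I_N) :
  walkb n k u v -> ladder_norm (rim_offset u v) <= k.
Proof.
elim: k u => [|k IH] u /=.
  by move/eqP=> ->; rewrite rim_offset_id ?(ltnW (ltn_ord v)) // leqn0 ladder_norm_eq0.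
case/existsP=> w /andP [/mobius_adjP [b step_b wE] /IH].
rewrite wE rim_offset_shift.
by have := ladder_norm_step _ _ (rim_offset_lt u v) step_b; lia.
Qed.

Lemma ladder_norm_walkb k (u v : 'I_N) :
  ladder_norm (rim_offset u v) = k -> walkb n k u v.
Proof.
elim: k u => [|k IH] u /= norm_uv.
  by apply/eqP/rim_offset_eq0/eqP; rewrite -ladder_norm_eq0 ?norm_uv ?rim_offset_lt.
have [b step_b norm_b] := ladder_norm_descent _ _ (rim_offset_lt u v) norm_uv.
apply/existsP; exists (rim_shift u b); apply/andP; split.
  by apply/mobius_adjP; exists b.
by apply: IH; rewrite rim_offset_shift.
Qed.

Lemma mobius_dist_isE (u v : 'I_N) k :
  mobius_dist_is n u v k <-> ladder_norm (rim_offset u v) = k.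
Proof.
split=> [[walk_k shortest] | norm_uv].
  apply/eqP; rewrite eqn_leq walkb_ladder_norm //= leqNgt; apply/negP => lt_k.
  by have := shortest _ lt_k; rewrite ladder_norm_walkb.
split=> [|k' lt_k']; first exact: ladder_norm_walkb.
by apply/negP => /walkb_ladder_norm; lia.
Qed.

Lemma ladder_norm_add_rung_step a : 0 < a < N ->
  ladder_norm ((a + n.+1) %% N) = ladder_norm a \/
  ladder_norm ((a + n.-1) %% N) = ladder_norm a.
Proof.
move=> /andP [a_gt0 lt_aN]; rewrite /ladder_norm.
case: (leqP a n) => [le_an|lt_na]; [right|left].
  by rewrite modn_small; lia.
by rewrite modn_addE ?ifF; lia.
Qed.

End MobiusLadder.

Lemma ladder_norm_near_antipode n : 3 <= n ->
  ladder_norm n n.-1 = 2 /\ ladder_norm n n.+1 = 2.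
Proof. by rewrite /ladder_norm; lia. Qed.

Theorem lemma3p5 (n : nat) (hn : 3 <= n) (x : 'I_(2 * n)) (l : nat)
  (hl1 : 1 <= l) (hl2 : l <= (n + 1) %/ 2) :
  forall v : 'I_(2 * n), @covers n x l v ->
    exists u : 'I_(2 * n), @covers n x l u /\ @mobius_dist_is n u v 2.
Proof.
have n_gt0 : 0 < n by lia.
move=> v; rewrite /covers mobius_dist_isE // => norm_xv.
have offset_gt0 : 0 < rim_offset n x v < 2 * n.
  rewrite rim_offset_lt // andbT lt0n -(ladder_norm_eq0 _ n_gt0) ?rim_offset_lt //.
  by rewrite norm_xv -lt0n.
have [c [lt_cN norm_c norm_xc]] : exists c, [/\ c < 2 * n, ladder_norm n c = 2 &
    ladder_norm n ((rim_offset n x v + (2 * n - c)) %% (2 * n)) = l].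
  have [norm_pred norm_succ] := ladder_norm_near_antipode n hn.
  have [near|near] := ladder_norm_add_rung_step _ n_gt0 _ offset_gt0.
    by exists n.-1; rewrite (_ : 2 * n - n.-1 = n.+1) ?near; try split; lia.
  by exists n.+1; rewrite (_ : 2 * n - n.+1 = n.-1) ?near; try split; lia.
exists (rim_shift _ n_gt0 v c); rewrite !mobius_dist_isE //.
by have [-> ->] := rim_offset_rim_shift _ n_gt0 x v _ lt_cN.
Qed.
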